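(* Let $k$ be a field and $V$ a $k$-vector space of dimension $n>2$. Define $b:V\times V\to V\wedge V$ by $b(u,v)=u\wedge v$. Then $b$ is alternating and $\operatorname{Adj}(b)=\{\lambda 1_V:\lambda\in k\}\cong k$ with trivial involution; that is, $b$ is $\perp$-indecomposable of orthogonal type.
   Context: $\operatorname{Adj}(b)$ is the set of $f\in\operatorname{End}V$ for which there is $f^*\in\operatorname{End}V$ with $b(uf,v)=b(u,vf^* )$ for all $u,v\in V$, with involution $f\mapsto f^*$. A bilinear map is $\perp$-indecomposable if $V$ has no decomposition into a set $\mathcal{X}\neq\{V\}$ of pairwise $b$-orthogonal subspaces generating $V$ with no proper subset generating $V$; orthogonal type means $\operatorname{Adj}(b)$ modulo its Jacobson radical is a field with trivial involution. *)

(* V = 'rV[k]_n (row vectors), End V = 'M[k]_n acting on the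
   right (u f := u *m f), as in the paper. *)
From mathcomp Require Import all_boot all_order all_algebra.
Set Implicit Arguments. Unset Strict Implicit. Unset Printing Implicit Defensive.
Import GRing.Theory.
Local Open Scope ring_scope.

Section Defs.
Variables (k : fieldType) (n : nat).

(* u /\ v in V /\ V, realised (injectively and linearly) inside 'M[k]_n as the
   alternating matrix u^T v - v^T u (the standard iso Lambda^2 V ~ alternating
   matrices, valid in every characteristic). *)
Definition wedge (u v : 'rV[k]_n) : 'M[k]_n := u^T *m v - v^T *m u.

Variable W : zmodType.
Variable b : 'rV[k]_n -> 'rV[k]_n -> W.

Definition is_adj (f g : 'M[k]_n) : Prop :=
  forall u v : 'rV[k]_n, b (u *m f) v = b u (v *m g).

Definition in_Adj (f : 'M[k]_n) : Prop := exists g, is_adj f g.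

(* Jacobson radical of the (unital) algebra Adj(b):
   x in J iff x in Adj(b) and 1 - a x is invertible in Adj(b) for all a in Adj(b). *)
Definition in_Jrad (x : 'M[k]_n) : Prop :=
  in_Adj x /\
  forall a, in_Adj a ->
    exists y, in_Adj y /\ y *m (1%:M - a *m x) = 1%:M
                      /\ (1%:M - a *m x) *m y = 1%:M.

(* Orthogonal type: Adj(b)/J(Adj(b)) is a field with trivial involution,
   written out elementwise modulo J. *)
Definition orthogonal_type : Prop :=
  ~ in_Jrad 1%:M /\
  (forall f g, in_Adj f -> in_Adj g -> in_Jrad (f *m g - g *m f)) /\
  (forall f, in_Adj f -> ~ in_Jrad f ->
     exists g, in_Adj g /\ in_Jrad (f *m g - 1%:M)) /\
  (* the induced involution f + J |-> f^* + J is trivial *)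
  (forall f g, is_adj f g -> in_Jrad (g - f)).

(* perp-decomposition: a finite family X of subspaces of V (row spaces of
   n x n matrices), pairwise b-orthogonal, generating V, and irredundant
   (no proper subfamily generates V). *)
Definition perp_decomposition (m : nat) (X : 'I_m -> 'M[k]_n) : Prop :=
  (forall i j : 'I_m, i != j ->
     forall u v : 'rV[k]_n, (u <= X i)%MS -> (v <= X j)%MS -> b u v = 0) /\
  (\sum_(i < m) X i == 1%:M)%MS /\
  (forall P : {set 'I_m}, P != setT -> ~~ (\sum_(i in P) X i == 1%:M)%MS).

Definition perp_indecomposable : Prop :=
  forall (m : nat) (X : 'I_m -> 'M[k]_n), perp_decomposition X ->
    m = 1%N /\ forall i, (X i == 1%:M)%MS.

End Defs.

(* An adjoint pair (f, g) of the wedge map must satisfy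
   e_i f /\ e_j = e_i /\ e_j g for all basis vectors; since n > 2 every pair of
   indices can be avoided by a third one, and reading off coefficients forces f
   and g to be the same scalar. Hence Adj(b) = k with trivial involution, its
   radical is 0, and the quotient Adj(b)/J = k is a field.
   Indecomposability: two vectors u, v with u /\ v = 0 and v != 0 are parallel,
   so in a perp-decomposition with two or more members every member lies on a
   single line, which cannot generate V when n > 1. *)

From mathcomp Require Import all_boot all_order all_algebra ring zify.
Import GRing.Theory.
Set Implicit Arguments. Unset Strict Implicit.
Local Open Scope ring_scope.

Lemma exists_ord_neq2 n (hn : (2 < n)%N) (i j : 'I_n) :
  exists l : 'I_n, l != i /\ l != j.
Proof.
have := cardsC [set i; j]; rewrite cards2 card_ord => card_compl.
have : (0 < #|~: [set i; j]|)%N by move: card_compl; case: (i != j) => /=; lia.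
by case/card_gt0P => l; rewrite !inE negb_or => /andP[li lj]; exists l.
Qed.

Section Wedge.
Variables (k : fieldType) (n : nat).
Implicit Types (u v : 'rV[k]_n) (f g : 'M[k]_n).

Lemma wedgeE u v a c : wedge u v a c = u 0 a * v 0 c - v 0 a * u 0 c.
Proof. by rewrite /wedge !mxE !big_ord1 !mxE. Qed.

Lemma wedgevv u : wedge u u = 0.
Proof. exact: subrr. Qed.

Lemma is_adj_scalar (c : k) : is_adj (@wedge k n) c%:M c%:M.
Proof. by move=> u v; apply/matrixP => a d; rewrite !wedgeE !mul_mx_scalar !mxE; ring. Qed.

Lemma is_adj_wedge_coef f g : is_adj (@wedge k n) f g ->
  forall i j a c : 'I_n,
    f i a * (j == c)%:R - (j == a)%:R * f i c
    = (i == a)%:R * g j c - g j a * (i == c)%:R.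
Proof.
move=> fg i j a c; have := congr1 (fun M : 'M[k]_n => M a c) (fg (delta_mx 0 i) (delta_mx 0 j)).
by rewrite /= !wedgeE -!rowE !mxE /= (eq_sym j c) (eq_sym j a) (eq_sym i a) (eq_sym i c).
Qed.

Lemma wedge_eq0_sub u v : wedge v u = 0 -> u != 0 -> (v <= u)%MS.
Proof.
move=> vu0 /rV0Pn[a ua0].
suff -> : v = (v 0 a / u 0 a) *: u by exact: scalemx_sub.
apply/rowP => c; rewrite mxE.
have /eqP := congr1 (fun M : 'M[k]_n => M a c) vu0; rewrite /= wedgeE !mxE subr_eq0 => /eqP vu.
by apply: (mulfI ua0); rewrite -vu; field.
Qed.

Hypothesis hn : (2 < n)%N.

Lemma is_adj_wedge_scalar f g :
  is_adj (@wedge k n) f g -> exists c, f = c%:M /\ g = c%:M.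
Proof.
move=> /is_adj_wedge_coef fg.
have f_offdiag i a : i != a -> f i a = 0.
  move=> ia; have [j [ji ja]] := exists_ord_neq2 hn i a.
  have := fg i j a j; rewrite eqxx (negbTE ja) (negbTE ia) eq_sym (negbTE ji).
  by rewrite mulr1 !mul0r mulr0 !subr0.
have g_offdiag j a : j != a -> g j a = 0.
  move=> ja; have [i [ij ia]] := exists_ord_neq2 hn j a.
  have := fg i j a i; rewrite eqxx (negbTE ia) (negbTE ja) eq_sym (negbTE ij).
  by rewrite !mul0r mulr0 mulr1 subr0 sub0r => /eqP; rewrite eq_sym oppr_eq0 => /eqP.
have f_g_diag i j : i != j -> f i i = g j j.
  move=> ij; have := fg i j i j; rewrite !eqxx (negbTE ij) eq_sym (negbTE ij).
  by rewrite mulr1 mul0r subr0 mul1r mulr0 subr0.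
have o0 : 'I_n := Ordinal (ltn_trans (isT : (0 < 2)%N) hn).
have f_diag i : f i i = f o0 o0.
  have [j [ji jo]] := exists_ord_neq2 hn i o0.
  by rewrite (f_g_diag i j) 1?eq_sym // (f_g_diag o0 j) // eq_sym.
exists (f o0 o0); split; apply/matrixP => i a; rewrite mxE.
  by have [<-|ia] := eqVneq i a; [rewrite mulr1n f_diag | rewrite f_offdiag].
have [<-|ia] := eqVneq i a; last by rewrite g_offdiag.
have [j [ji _]] := exists_ord_neq2 hn i i.
by rewrite mulr1n -(f_g_diag j i) // f_diag.
Qed.

Lemma in_Adj_wedge f : in_Adj (@wedge k n) f <-> exists l : k, f = l%:M.
Proof.
split; first by case=> g /is_adj_wedge_scalar[c [-> _]]; exists c.
by case=> l ->; exists l%:M; apply: is_adj_scalar.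
Qed.

Lemma is_adj_wedge_trivial f g : is_adj (@wedge k n) f g -> g = f.
Proof. by move=> /is_adj_wedge_scalar[c [-> ->]]. Qed.

End Wedge.

Section ScalarAdjoints.
Variables (k : fieldType) (n : nat) (W : zmodType) (b : 'rV[k]_n -> 'rV[k]_n -> W).
Hypothesis n_gt0 : (0 < n)%N.
Hypothesis in_AdjE : forall f, in_Adj b f <-> exists l : k, f = l%:M.
Hypothesis adj_trivial : forall f g, is_adj b f g -> g = f.

Lemma scalar_mx1_neq0 : (1%:M : 'M[k]_n) != 0.
Proof. by rewrite -mxrank_eq0 mxrank1 -lt0n. Qed.

Lemma in_Adj_scalar (c : k) : in_Adj b c%:M.
Proof. by apply/in_AdjE; exists c. Qed.

Lemma in_Jrad0 : in_Jrad b 0.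
Proof.
split; first by rewrite -(raddf0 (@scalar_mx k n)); apply: in_Adj_scalar.
by move=> a _; exists 1%:M; rewrite mulmx0 subr0 mulmx1; split=> //; apply: in_Adj_scalar.
Qed.

Lemma in_JradE x : in_Jrad b x <-> x = 0.
Proof.
split=> [[/in_AdjE[c ->] xJ] | ->]; last exact: in_Jrad0.
have [-> | c0] := eqVneq c 0; first by rewrite raddf0.
have [y [_ [y_inv _]]] := xJ _ (in_Adj_scalar c^-1).
move: y_inv; rewrite -scalar_mxM mulVf // subrr mulmx0 => /esym/eqP.
by rewrite (negbTE scalar_mx1_neq0).
Qed.

Lemma orthogonal_type_scalar_Adj : orthogonal_type b.
Proof.
split; first by move/in_JradE/eqP; rewrite (negbTE scalar_mx1_neq0).
split.
  move=> f g /in_AdjE[c ->] /in_AdjE[d ->].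
  by apply/in_JradE; rewrite -!scalar_mxM mulrC subrr.
split.
  move=> f /in_AdjE[c ->] cJ.
  have c0 : c != 0 by apply: contra_notN cJ => /eqP->; rewrite raddf0; exact: in_Jrad0.
  exists c^-1%:M; split; first exact: in_Adj_scalar.
  by apply/in_JradE; rewrite -scalar_mxM mulfV // subrr.
by move=> f g /adj_trivial->; apply/in_JradE; rewrite subrr.
Qed.

End ScalarAdjoints.

Lemma perp_decomposition_neq0 (k : fieldType) n (W : zmodType)
    (b : 'rV[k]_n -> 'rV[k]_n -> W) m (X : 'I_m -> 'M[k]_n) :
  perp_decomposition b X -> forall j, X j != 0.
Proof.
case=> _ [sumX irrX] j; apply/negP => /eqP Xj0.
have ne : [set~ j] != setT by apply/eqP => /setP/(_ j); rewrite !inE eqxx.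
apply: (negP (irrX _ ne)).
rewrite (bigD1 j) //= Xj0 adds0mx_id in sumX.
by rewrite (eq_bigl (fun i => i != j)) // => i; rewrite !inE.
Qed.

Lemma perp_wedge_sub_line (k : fieldType) n m (X : 'I_m -> 'M[k]_n) :
  perp_decomposition (@wedge k n) X ->
  forall i j (v : 'rV[k]_n), i != j -> (v <= X j)%MS -> v != 0 -> (X i <= v)%MS.
Proof.
case=> orthX _ i j v ij vXj v0; apply/row_subP => r.
exact: wedge_eq0_sub (orthX i j ij _ _ (row_sub r _) vXj) v0.
Qed.

Lemma wedge_perp_indecomposable (k : fieldType) n (hn : (1 < n)%N) :
  perp_indecomposable (@wedge k n).
Proof.
move=> m X decX; have X_neq0 := perp_decomposition_neq0 decX.
have [_ [sumX _]] := decX.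
case: m X decX X_neq0 sumX => [|[|m]] X decX X_neq0 sumX.
- by move: sumX; rewrite big_ord0 => /andP[_]; rewrite sub1mx -col_leq_rank mxrank0; lia.
- by split=> // i; rewrite big_ord1 (ord1 i) in sumX *.
have [u uX0 u0] := rowV0Pn (X_neq0 ord0).
have [w wXm w0] := rowV0Pn (X_neq0 ord_max).
have ord0_max : (ord0 : 'I_m.+2) != ord_max by [].
have X_sub_u l : (X l <= u)%MS.
  have [-> | l0] := eqVneq l ord0; last exact: (perp_wedge_sub_line decX l0 uX0 u0).
  apply: submx_trans (perp_wedge_sub_line decX ord0_max wXm w0) _.
  by apply: submx_trans wXm (perp_wedge_sub_line decX _ uX0 u0); rewrite eq_sym.
have : (1%:M <= u)%MS.
  by apply: submx_trans (proj2 (andP sumX)) _; apply/sumsmx_subP => l _.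
by rewrite sub1mx -col_leq_rank => /leq_trans/(_ (rank_leq_row u)); lia.
Qed.

Theorem lemma7p1 (k : fieldType) (n : nat) (hn : (2 < n)%N) :
  (forall u : 'rV[k]_n, wedge u u = 0) /\
  (forall f : 'M[k]_n, in_Adj (@wedge k n) f <-> exists l : k, f = l%:M) /\
  (forall f g : 'M[k]_n, is_adj (@wedge k n) f g -> g = f) /\
  perp_indecomposable (@wedge k n) /\
  orthogonal_type (@wedge k n).
Proof.
have n_gt0 : (0 < n)%N by exact: ltn_trans hn.
split; first exact: wedgevv.
split; first exact: in_Adj_wedge.
split; first exact: is_adj_wedge_trivial.
split; first exact: wedge_perp_indecomposable (ltnW hn).
apply: orthogonal_type_scalar_Adj n_gt0 _ _.
- exact: in_Adj_wedge.
- exact: is_adj_wedge_trivial.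
Qed.
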